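(* Let $B_m\in\mathbb{C}^{m\times m}$, let $\lambda_1,\ldots,\lambda_{m+1}\in\mathbb{C}$, let $P(\lambda)=\prod_{i=1}^{m+1}(\lambda-\lambda_i)$ and $\delta=\sum_{i=1}^{m+1}\lambda_i-\operatorname{tr}(B_m)$. For $b,c\in\mathbb{C}^m$ write $B_{m+1}(b,c)=\begin{pmatrix}B_m&c\\ b^{T}&\delta\end{pmatrix}$. Suppose $b,c\in\mathbb{C}^m$ satisfy $\det(\lambda I_{m+1}-B_{m+1}(b,c))=P(\lambda)$. Then: (i) $c$ is the unique $c'\in\mathbb{C}^m$ with $\det(\lambda I_{m+1}-B_{m+1}(b,c'))=P(\lambda)$ if and only if the pair $(B_m, b^T)$ is observable, i.e. $\operatorname{rank}(b,\,B_m^{T}b,\,(B_m^{T})^2b,\ldots)=m$; (ii) $b$ is the unique $b'\in\mathbb{C}^m$ with $\det(\lambda I_{m+1}-B_{m+1}(b',c))=P(\lambda)$ if and only if the pair $(B_m,c)$ is controllable, i.e. $\operatorname{rank}(c,\,B_mc,\,B_m^2c,\ldots)=m$. *)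

From mathcomp Require Import all_boot all_order all_algebra.
From mathcomp Require Import complex.
From mathcomp Require Import Rstruct.
Set Implicit Arguments. Unset Strict Implicit. Unset Printing Implicit Defensive.
Import GRing.Theory.
Local Open Scope ring_scope.

Notation C := (complex Rdefinitions.R).

Definition krylov (F : fieldType) (m : nat) (A : 'M[F]_m) (v : 'cV[F]_m)
  : 'M[F]_m := \matrix_(i < m, j < m) ((A ^+ j) *m v) i 0.

Definition observable (F : fieldType) (m : nat) (A : 'M[F]_m) (b : 'cV[F]_m) : Prop :=
  \rank (krylov A^T b) = m.

Definition controllable (F : fieldType) (m : nat) (A : 'M[F]_m) (c : 'cV[F]_m) : Prop :=
  \rank (krylov A c) = m.

Definition bordered (F : fieldType) (m : nat) (B : 'M[F]_m) (delta : F)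
  (b c : 'cV[F]_m) : 'M[F]_(m + 1) :=
  block_mx B c b^T delta%:M.

From mathcomp Require Import all_boot all_order all_algebra.
From mathcomp Require Import complex.
From mathcomp Require Import Rstruct.
Set Implicit Arguments. Unset Strict Implicit. Unset Printing Implicit Defensive.
Import GRing.Theory.
Local Open Scope ring_scope.

(** Expanding along the last row and column,
    det (X I - B_{m+1}(b, c)) = (X - delta) det (X I - B) - b^T adj (X I - B) c.
    The last term is bilinear in (b, c), so the vectors c' (resp. b') giving the
    prescribed characteristic polynomial form a coset of the kernel of
    c' |-> b^T adj (X I - B) c' (resp. b' |-> b'^T adj (X I - B) c).
    Since adj (X I - B) = sum_k X^k sum_j p_(k+j+1) B^j with p = char_poly B
    monic of degree m, this polynomial vanishes iff the Markov parameters
    b^T B^j c' vanish for j < m, a triangular system with unit diagonal.  So the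
    kernel is trivial exactly when the corresponding Krylov matrix has rank m. *)

Section PolyMatrixCoef.
Variables (R : comNzRingType) (k : nat).

Lemma coefp_mulCmx m n p (A : 'M[R]_(m, n)) (M : 'M[{poly R}]_(n, p)) :
  map_mx (coefp k) (map_mx polyC A *m M) = A *m map_mx (coefp k) M.
Proof.
apply/matrixP => i j; rewrite !mxE /coefp coef_sum.
by apply: eq_bigr => l _; rewrite !mxE coefCM.
Qed.

Lemma coefp_mulmxC m n p (M : 'M[{poly R}]_(m, n)) (A : 'M[R]_(n, p)) :
  map_mx (coefp k) (M *m map_mx polyC A) = map_mx (coefp k) M *m A.
Proof.
apply/matrixP => i j; rewrite !mxE /coefp coef_sum.
by apply: eq_bigr => l _; rewrite !mxE coefMC.
Qed.

End PolyMatrixCoef.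

Section AdjugateExpansion.
Variables (R : comNzRingType) (n : nat) (A : 'M[R]_n).
Local Notation p := (char_poly A).

Definition adj_coef k : 'M[R]_n := map_mx (coefp k) (\adj (char_poly_mx A)).

Lemma adj_coefS k : adj_coef k = A *m adj_coef k.+1 + (p`_k.+1)%:M.
Proof.
have coefp_scalar (a : {poly R}) : map_mx (coefp k.+1) a%:M = (a`_k.+1)%:M :> 'M_n.
  by apply/matrixP => i j; rewrite !mxE /coefp coefMn.
have := congr1 (map_mx (coefp k.+1)) (mul_mx_adj (char_poly_mx A)).
rewrite coefp_scalar {1}/char_poly_mx mulmxBl map_mxB coefp_mulCmx mul_scalar_mx => <-.
suff -> : map_mx (coefp k.+1) ('X *: \adj (char_poly_mx A)) = adj_coef k.
  by rewrite addrC subrK.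
by apply/matrixP => i j; rewrite !mxE /coefp coefXM.
Qed.

Lemma adj_coef_eventually0 : exists N, forall k, (N <= k)%N -> adj_coef k = 0.
Proof.
exists (\max_i \max_j size (\adj (char_poly_mx A) i j)) => k le_N_k.
apply/matrixP => i j; rewrite [LHS]mxE [RHS]mxE /coefp nth_default //.
by apply: leq_trans (leq_trans (leq_bigmax i) le_N_k); apply: (leq_bigmax j).
Qed.

Lemma adj_coefE k : adj_coef k = \sum_(j < n - k) p`_(k + j).+1 *: A ^+ j.
Proof.
(* Solve the recurrence adj_coefS downwards from a tail where everything vanishes. *)
have [N adjN] := adj_coef_eventually0.
suff expand d : forall k, (maxn N n <= k + d)%N ->
    adj_coef k = \sum_(j < n - k) p`_(k + j).+1 *: A ^+ j.
  exact: (expand (maxn N n)) (leq_addl _ _).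
elim: d => [|d IHd] {}k; rewrite ?addn0 ?addnS => le_k.
  have [le_N_k le_n_k] : (N <= k)%N /\ (n <= k)%N.
    by split; apply: leq_trans le_k; rewrite ?leq_maxl ?leq_maxr.
  by rewrite adjN // (eqP le_n_k) big_ord0.
rewrite adj_coefS (IHd k.+1) -?addSnnS //.
have [lt_k_n | le_n_k] := ltnP k n.
  rewrite -(subnSK lt_k_n) big_ord_recl addn0 expr0 scalemx1 addrC mulmx_sumr.
  congr (_ + _); apply: eq_bigr => j _.
  by rewrite lift0 addSnnS -scalemxAr mulmxE -exprS.
have p_k1 : p`_k.+1 = 0 by rewrite nth_default // size_char_poly.
rewrite p_k1 (eqP le_n_k) (eqP (leq_trans le_n_k (leqnSn k))) !big_ord0.
by rewrite mulmx0 raddf0 addr0.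
Qed.

End AdjugateExpansion.

Section TransferFunction.
Variables (R : comNzRingType) (n : nat) (A : 'M[R]_n).
Local Notation p := (char_poly A).

Definition transfer_num (x y : 'cV[R]_n) : {poly R} :=
  (map_mx polyC x^T *m \adj (char_poly_mx A) *m map_mx polyC y) 0 0.

Definition markov (x y : 'cV[R]_n) j : R := (x^T *m A ^+ j *m y) 0 0.

Lemma transfer_numBl x x' y :
  transfer_num (x - x') y = transfer_num x y - transfer_num x' y.
Proof. by rewrite /transfer_num raddfB map_mxB !mulmxBl [LHS]mxE [X in _ + X]mxE. Qed.

Lemma transfer_numBr x y y' :
  transfer_num x (y - y') = transfer_num x y - transfer_num x y'.
Proof. by rewrite /transfer_num map_mxB mulmxBr [LHS]mxE [X in _ + X]mxE. Qed.

Lemma coef_transfer_num x y k :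
  (transfer_num x y)`_k = \sum_(j < n - k) p`_(k + j).+1 * markov x y j.
Proof.
transitivity (map_mx (coefp k)
  (map_mx polyC x^T *m \adj (char_poly_mx A) *m map_mx polyC y) 0 0).
  by rewrite mxE.
rewrite coefp_mulmxC coefp_mulCmx -/(adj_coef A k) adj_coefE.
rewrite mulmx_sumr mulmx_suml summxE; apply: eq_bigr => j _.
by rewrite -scalemxAr -scalemxAl mxE.
Qed.

Lemma transfer_num_eq0 x y :
  transfer_num x y = 0 <-> forall j, (j < n)%N -> markov x y j = 0.
Proof.
split => [tn0 | markov0]; last first.
  apply/polyP => k; rewrite coef_transfer_num coef0 big1 // => j _.
  by rewrite markov0 ?mulr0 // (leq_trans (ltn_ord j) (leq_subr k n)).
have p_n : p`_n = 1.
  by have := char_poly_monic A; rewrite monicE lead_coefE size_char_poly => /eqP.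
elim/ltn_ind => j IHj lt_j_n.
have := coef_transfer_num x y (n - j.+1).
rewrite tn0 coef0 subKn // big_ord_recr /= big1 => [|i _]; last first.
  by rewrite IHj ?mulr0 // (ltn_trans _ lt_j_n).
by rewrite -addnS subnK // p_n add0r mul1r => /esym.
Qed.

End TransferFunction.

Lemma markov_trmx (R : comNzRingType) n (A : 'M[R]_n) x y j :
  markov A^T x y j = markov A y x j.
Proof.
have trmxX : (A ^+ j)^T = A^T ^+ j.
  elim: j => [|j IHj]; first by rewrite !expr0 trmx1.
  by rewrite exprS -mulmxE trmx_mul IHj mulmxE -exprSr.
rewrite /markov; transitivity ((y^T *m A ^+ j *m x)^T 0 0); last by rewrite mxE.
by rewrite !trmx_mul trmxK trmxX mulmxA.
Qed.

Lemma krylov_full_rankP (F : fieldType) n (A : 'M[F]_n) v :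
  \rank (krylov A v) = n <-> forall d, (forall j, (j < n)%N -> markov A d v j = 0) -> d = 0.
Proof.
have krylovE d (j : 'I_n) : (d^T *m krylov A v) 0 j = markov A d v j.
  by rewrite /markov -mulmxA !mxE; apply: eq_bigr => i _; rewrite !mxE.
split => [full | ker0].
  move=> d markov0; have : d^T *m krylov A v = 0.
    by apply/matrixP => i j; rewrite ord1 krylovE markov0 ?mxE.
  move/eqP; rewrite mulmx_free_eq0; last exact/eqP.
  by move/eqP; rewrite -trmx0 => /trmx_inj.
apply/eqP; apply: inj_row_free => u uK0; apply: trmx_inj; rewrite trmx0.
apply: ker0 => j lt_j_n.
by rewrite -(krylovE u^T (Ordinal lt_j_n)) trmxK uK0 mxE.
Qed.

Lemma det_block_mx_scalar (R : idomainType) n (A : 'M[R]_n) (u : 'cV_n) (v : 'rV_n) d :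
  \det A != 0 -> \det (block_mx A u v d%:M) = d * \det A - (v *m \adj A *m u) 0 0.
Proof.
(* Right multiplication by N clears the upper right block. *)
move=> detA_neq0.
pose N := block_mx 1%:M (- (\adj A *m u)) 0 (\det A)%:M : 'M[R]_(n + 1).
have detN : \det N = \det A by rewrite det_ublock det1 mul1r det_scalar1.
have eliminate : block_mx A u v d%:M *m N =
    block_mx A 0 v ((d * \det A - (v *m \adj A *m u) 0 0)%:M).
  rewrite mulmx_block !mulmx1 !mulmx0 !addr0 mulmxN mulmxA mul_mx_adj.
  rewrite mul_scalar_mx mul_mx_scalar addNr; congr block_mx.
  rewrite mulmxN mulmxA -scalar_mxM {1}[v *m _ *m u]mx11_scalar.
  by rewrite -raddfN -raddfD addrC.
have := congr1 determinant eliminate.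
rewrite det_mulmx detN det_lblock det_scalar1 => /eqP.
by rewrite mulrC eq_sym (inj_eq (mulfI detA_neq0)) => /eqP ->.
Qed.

Lemma char_poly_bordered (F : fieldType) n (A : 'M[F]_n) d x y :
  char_poly (bordered A d x y) = ('X - d%:P) * char_poly A - transfer_num A x y.
Proof.
rewrite /char_poly /bordered /char_poly_mx (scalar_mx_block n 1) map_block_mx.
rewrite opp_block_mx add_block_mx map_scalar_mx -raddfB /=.
rewrite det_block_mx_scalar ?monic_neq0 ?char_poly_monic //.
by rewrite /transfer_num !sub0r !mulNmx !mulmxN opprK.
Qed.

Lemma zmod_fiber_uniqP (U V : zmodType) (f : U -> V) u0 :
  {morph f : u v / u - v} -> (forall u, f u = f u0 -> u = u0) <-> (forall u, f u = 0 -> u = 0).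
Proof.
move=> fB; split=> [uniq_u0 u fu0 | ker0 u fu].
  have := uniq_u0 (u0 - u); rewrite fB fu0 subr0 => /(_ erefl).
  by move/(congr1 (fun w => u0 - w)); rewrite subKr subrr.
by apply/eqP; rewrite -subr_eq0; apply/eqP/ker0; rewrite fB fu subrr.
Qed.

Theorem mainTheorem5 (m : nat) (Bm : 'M[C]_m) (lam : 'I_m.+1 -> C)
    (b c : 'cV[C]_m) :
  let P : {poly C} := \prod_(i < m.+1) ('X - (lam i)%:P) in
  let delta : C := \sum_(i < m.+1) lam i - \tr Bm in
  char_poly (bordered Bm delta b c) = P ->
  ((forall c' : 'cV[C]_m, char_poly (bordered Bm delta b c') = P -> c' = c)
     <-> observable Bm b)
  /\
  ((forall b' : 'cV[C]_m, char_poly (bordered Bm delta b' c) = P -> b' = b)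
     <-> controllable Bm c).
Proof.
move=> P delta charP.
have charE x y :
    char_poly (bordered Bm delta x y) = P <-> transfer_num Bm x y = transfer_num Bm b c.
  by rewrite -charP !char_poly_bordered; split => [/addrI/oppr_inj | ->].
split.
  rewrite /observable krylov_full_rankP.
  transitivity (forall d, transfer_num Bm b d = 0 -> d = 0).
    rewrite -(zmod_fiber_uniqP c (transfer_numBr Bm b)).
    by split => uniq_c c' /charE/uniq_c.
  split => ker0 d d_ker; apply: ker0.
    by apply/transfer_num_eq0 => j /d_ker; rewrite markov_trmx.
  by move=> j /(proj1 (transfer_num_eq0 _ _ _) d_ker); rewrite markov_trmx.
rewrite /controllable krylov_full_rankP.
transitivity (forall d, transfer_num Bm d c = 0 -> d = 0).
  rewrite -(zmod_fiber_uniqP b (fun x x' => transfer_numBl Bm x x' c)).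
  by split => uniq_b b' /charE/uniq_b.
by split => ker0 d d_ker; apply: ker0; apply/transfer_num_eq0.
Qed.
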